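(* For $z\in\mathbb R$ let \[p_1(z)=-7+30z-24z^2-14z^3+12z^4-6z^5+2z^6,\] \[p_2(z)=81-324z+1188z^2-1404z^3-216z^4+1404z^5-972z^6+432z^7-108z^8,\] \[\mathcal Q(z)=\frac13(z^2-z+1)-\frac{\sqrt[3]{2}\,(3-(z^2-z+1)^2)}{3\sqrt[3]{p_1(z)+\sqrt{p_2(z)}}}+\frac{\sqrt[3]{p_1(z)+\sqrt{p_2(z)}}}{3\sqrt[3]{2}},\] and for $0\le u\le v\le1/2$ let \[\xi(u,v)=\frac{(2-u)^{2-u}(1+u)^{1+u}}{4u^{3u}v^v(1-v-u)^{1-v-u}(v-u)^{v-u}(1-v)^{1-v}(1-u)^{1-u}}.\] Define $h\colon[0,1/2)\to\mathbb R$ by \[h(v)=\xi(\mathcal Q(v),v)\frac{(2-2v)^{2-2v}}{(1-2v)^{1-2v}}.\] Then $h(v)<21.97225$ for all $v\in[0,1/2)$.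
   Context: The convention $0^0=1$ is used. *)

From Stdlib Require Import Reals.
Open Scope R_scope.

(* Real power with the convention 0^0 = 1 (0^y = 0 for y <> 0);
   for x > 0 it is x^y = exp (y ln x). Only used with x >= 0. *)
Definition rpow (x y : R) : R :=
  if Req_EM_T x 0 then (if Req_EM_T y 0 then 1 else 0) else Rpower x y.

Definition cbrt (x : R) : R :=
  if Rlt_dec x 0 then - Rpower (- x) (1/3)
  else if Req_EM_T x 0 then 0 else Rpower x (1/3).

Definition p1 (z : R) : R :=
  -7 + 30*z - 24*z^2 - 14*z^3 + 12*z^4 - 6*z^5 + 2*z^6.

Definition p2 (z : R) : R :=
  81 - 324*z + 1188*z^2 - 1404*z^3 - 216*z^4 + 1404*z^5 - 972*z^6
  + 432*z^7 - 108*z^8.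

Definition Qf (z : R) : R :=
  (1/3) * (z^2 - z + 1)
  - cbrt 2 * (3 - (z^2 - z + 1)^2) / (3 * cbrt (p1 z + sqrt (p2 z)))
  + cbrt (p1 z + sqrt (p2 z)) / (3 * cbrt 2).

Definition xi (u v : R) : R :=
  (rpow (2 - u) (2 - u) * rpow (1 + u) (1 + u)) /
  (4 * rpow u (3 * u) * rpow v v * rpow (1 - v - u) (1 - v - u)
     * rpow (v - u) (v - u) * rpow (1 - v) (1 - v) * rpow (1 - u) (1 - u)).

Definition h (v : R) : R :=
  xi (Qf v) v * (rpow (2 - 2*v) (2 - 2*v) / rpow (1 - 2*v) (1 - 2*v)).

From Stdlib Require Import Reals Lra Psatz.
From Coquelicot Require Import Coquelicot.
Open Scope R_scope.

(* For 0 < v < 1/2, Q(v) is Cardano's formula for the root in (0, v) of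
   u^3 - (v^2 - v + 1) u^2 + u - v (1 - v), and with u = Q(v), ln h(v) is a sum of terms
   x ln (z / x), with x and z affine in (u, v), minus 2 v ln 2.  Since ln y <= y - 1, each
   term is at most its tangent x ln r + z / r - x for any r > 0; taking for r the value of
   z / x at the maximiser of ln h turns the sum of the tangents into an affine function of
   (u, v) that stays below ln 21.97225 on 0 < u < v < 1/2.  The numerical bounds on the
   logarithms involved come from writing each number as 2^k (1 + t) / (1 - t) and bounding
   ln ((1 + t) / (1 - t)) = 2 atanh t by its Taylor polynomial. *)

Lemma le_of_is_derive_nonneg (f df : R -> R) (a b : R) :
  (forall x, a <= x <= b -> is_derive f x (df x)) ->
  (forall x, a <= x <= b -> 0 <= df x) ->
  forall t, a <= t <= b -> f a <= f t.
Proof.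
intros Hd Hdf t Ht.
destruct (MVT_gen f a t df) as (c & Hc & Hmvt); rewrite ?Rmin_left, ?Rmax_right in *; try lra.
- intros x Hx; apply Hd; lra.
- intros x Hx. apply continuity_pt_filterlim, (ex_derive_continuous (K := R_AbsRing) (V := R_NormedModule)).
  exists (df x); apply Hd; lra.
- assert (0 <= df c * (t - a)) by (apply Rmult_le_pos; [apply Hdf|]; lra). lra.
Qed.

Definition atanh_taylor (t : R) : R := t + t^3/3 + t^5/5 + t^7/7 + t^9/9.

Lemma ln_ratio_ge_taylor t : 0 <= t < 1 -> 2 * atanh_taylor t <= ln (1 + t) - ln (1 - t).
Proof.
intros Ht.
assert (Hg := le_of_is_derive_nonneg
  (fun x => ln (1 + x) - ln (1 - x) - 2 * atanh_taylor x)
  (fun x => 2 * x^10 / (1 - x^2)) 0 t).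
cbv beta in Hg. rewrite Rplus_0_r, Rminus_0_r, ln_1 in Hg.
enough (0 - 0 - 2 * atanh_taylor 0 <= ln (1 + t) - ln (1 - t) - 2 * atanh_taylor t)
  by (unfold atanh_taylor in *; lra).
apply Hg; try lra.
- intros x Hx. unfold atanh_taylor. auto_derive; [lra | field; split; nra].
- intros x Hx. apply Rmult_le_pos; [apply Rmult_le_pos, pow_le; lra|].
  apply Rlt_le, Rinv_0_lt_compat. nra.
Qed.

Lemma ln_ratio_le_taylor t : 0 <= t < 1 ->
  ln (1 + t) - ln (1 - t) <= 2 * atanh_taylor t + 2 * t^11 / (11 * (1 - t^2)).
Proof.
intros Ht.
assert (Hg := le_of_is_derive_nonneg
  (fun x => 2 * atanh_taylor x + 2 * x^11 / (11 * (1 - x^2)) - (ln (1 + x) - ln (1 - x)))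
  (fun x => 4 * x^12 / (11 * (1 - x^2)^2)) 0 t).
cbv beta in Hg. rewrite Rplus_0_r, Rminus_0_r, ln_1 in Hg.
enough (2 * atanh_taylor 0 + 2 * 0^11 / (11 * (1 - 0^2)) - (0 - 0) <=
        2 * atanh_taylor t + 2 * t^11 / (11 * (1 - t^2)) - (ln (1 + t) - ln (1 - t)))
  by (unfold atanh_taylor in *; lra).
apply Hg; try lra.
- intros x Hx. unfold atanh_taylor. auto_derive; [repeat split; nra | field; split; nra].
- intros x Hx. apply Rmult_le_pos; [apply Rmult_le_pos, pow_le; lra|].
  apply Rlt_le, Rinv_0_lt_compat. assert (0 < 1 - x^2) by nra. nra.
Qed.

Lemma ln2_bounds : 0.6931471766 <= ln 2 <= 0.6931471806.
Proof.
assert (Hsplit : ln 2 = (ln (1 + 1/5) - ln (1 - 1/5)) + (ln (1 + 1/7) - ln (1 - 1/7))).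
{ replace 2 with ((1 + 1/5) * (1 + 1/7) / ((1 - 1/5) * (1 - 1/7))) by field.
  rewrite ln_div, !ln_mult; lra. }
rewrite Hsplit.
pose proof (ln_ratio_ge_taylor (1/5)). pose proof (ln_ratio_le_taylor (1/5)).
pose proof (ln_ratio_ge_taylor (1/7)). pose proof (ln_ratio_le_taylor (1/7)).
unfold atanh_taylor in *. split; lra.
Qed.

Definition pow2_offset (k : nat) (x : R) : R := (x - 2^k) / (x + 2^k).

Lemma ln_eq_pow2_offset k x : 0 < x ->
  let t := pow2_offset k x in
  -1 < t < 1 /\ ln x = INR k * ln 2 + (ln (1 + t) - ln (1 - t)).
Proof.
intros Hx t.
assert (H2 : 0 < 2^k) by (apply pow_lt; lra).
assert (Ht : -1 < t < 1).
{ unfold t, pow2_offset. split; [apply Rlt_div_r | apply Rlt_div_l]; lra. }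
split; [exact Ht|].
replace (ln (1 + t) - ln (1 - t)) with (ln (x / 2^k)).
- rewrite ln_div, ln_pow; lra.
- rewrite <- ln_div by lra. f_equal. unfold t, pow2_offset. field. lra.
Qed.

Lemma atanh_taylor_opp t : atanh_taylor (- t) = - atanh_taylor t.
Proof. unfold atanh_taylor. field. Qed.

Lemma pow2_offset_nonneg k x : 2^k <= x -> 0 <= pow2_offset k x.
Proof.
intros Hx. assert (0 < 2^k) by (apply pow_lt; lra).
unfold pow2_offset. apply Rmult_le_pos; [lra | apply Rlt_le, Rinv_0_lt_compat; lra].
Qed.

Lemma pow2_offset_nonpos k x : 0 < x <= 2^k -> pow2_offset k x <= 0.
Proof.
intros Hx.
unfold pow2_offset. apply Rmult_le_0_r; [lra | apply Rlt_le, Rinv_0_lt_compat; lra].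
Qed.

Lemma ln_le_above_pow2 k x : 2^k <= x ->
  ln x <= INR k * 0.6931471806 + 2 * atanh_taylor (pow2_offset k x)
          + 2 * pow2_offset k x ^ 11 / (11 * (1 - pow2_offset k x ^ 2)).
Proof.
intros Hx.
assert (0 < 2^k) by (apply pow_lt; lra).
destruct (ln_eq_pow2_offset k x ltac:(lra)) as [Ht ->].
set (t := pow2_offset k x) in *.
assert (0 <= t) by (apply pow2_offset_nonneg; lra).
pose proof (ln_ratio_le_taylor t ltac:(lra)). pose proof ln2_bounds. pose proof (pos_INR k).
nra.
Qed.

Lemma ln_le_below_pow2 k x : 0 < x <= 2^k ->
  ln x <= INR k * 0.6931471806 + 2 * atanh_taylor (pow2_offset k x).
Proof.
intros Hx.
destruct (ln_eq_pow2_offset k x ltac:(lra)) as [Ht ->].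
assert (Hs := pow2_offset_nonpos k x Hx).
set (t := pow2_offset k x) in *.
pose proof (ln_ratio_ge_taylor (- t) ltac:(lra)) as Hodd.
rewrite atanh_taylor_opp in Hodd.
replace (1 + - t) with (1 - t) in Hodd by ring. replace (1 - - t) with (1 + t) in Hodd by ring.
pose proof ln2_bounds. pose proof (pos_INR k).
nra.
Qed.

Lemma ln_ge_above_pow2 k x : 2^k <= x ->
  INR k * 0.6931471766 + 2 * atanh_taylor (pow2_offset k x) <= ln x.
Proof.
intros Hx.
assert (0 < 2^k) by (apply pow_lt; lra).
destruct (ln_eq_pow2_offset k x ltac:(lra)) as [Ht ->].
set (t := pow2_offset k x) in *.
assert (0 <= t) by (apply pow2_offset_nonneg; lra).
pose proof (ln_ratio_ge_taylor t ltac:(lra)). pose proof ln2_bounds. pose proof (pos_INR k).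
nra.
Qed.

Ltac ln_upper_bound k :=
  eapply Rle_trans;
  [ first [ apply (ln_le_above_pow2 k); lra | apply (ln_le_below_pow2 k); lra ]
  | unfold atanh_taylor, pow2_offset; cbn [INR]; lra ].

Ltac ln_lower_bound k :=
  eapply Rle_trans;
  [| apply (ln_ge_above_pow2 k); lra ];
  unfold atanh_taylor, pow2_offset; cbn [INR]; lra.

Lemma cardano_root (p q D w : R) : w <> 0 ->
  D^2 = q^2/4 + p^3/27 -> w^3 = - q/2 + D ->
  (w - p/(3*w))^3 + p * (w - p/(3*w)) + q = 0.
Proof.
intros Hw HD Hw3.

replace ((w - p/(3*w))^3 + p * (w - p/(3*w)) + q)
  with (((w^3)^2 + q * w^3 - p^3/27) / w^3) by (field; exact Hw).
rewrite Hw3.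
replace ((- q/2 + D)^2 + q * (- q/2 + D) - p^3/27) with (D^2 - (q^2/4 + p^3/27)) by field.
rewrite HD, Rminus_diag_eq by reflexivity. unfold Rdiv. ring.
Qed.

Lemma cbrt_pos_cube x : 0 < x -> 0 < cbrt x /\ cbrt x ^ 3 = x.
Proof.
intros Hx. unfold cbrt.
destruct (Rlt_dec x 0); [lra|]. destruct (Req_EM_T x 0); [lra|].
split; [apply exp_pos|].
rewrite <- Rpower_pow by apply exp_pos.
rewrite Rpower_mult. replace (1/3 * INR 3) with 1 by (simpl; field).
apply Rpower_1; lra.
Qed.

Lemma Qf_root v : 0 <= v <= 1 ->
  Qf v ^ 3 - (v^2 - v + 1) * Qf v ^ 2 + Qf v - v * (1 - v) = 0.
Proof.
intros Hv.
set (b := v^2 - v + 1).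
set (p := (3 - b^2) / 3).
set (q := - 2 * b^3 / 27 + b / 3 - (1 - b)).
assert (Hp : 0 < p) by (unfold p, b; nra).
assert (Hp1 : p1 v = - 27 * q) by (unfold p1, q, b; field).
assert (Hp2 : p2 v = 2916 * (q^2/4 + p^3/27)) by (unfold p2, q, p, b; field).
assert (Hdisc : q^2/4 < q^2/4 + p^3/27) by (pose proof (pow_lt p 3 Hp); lra).
set (D := sqrt (p2 v) / 54).
assert (HD : D^2 = q^2/4 + p^3/27).
{ unfold D. replace ((sqrt (p2 v) / 54)^2) with (sqrt (p2 v) * sqrt (p2 v) / 2916) by field.
  rewrite sqrt_sqrt; [rewrite Hp2; field | rewrite Hp2; pose proof (pow2_ge_0 q); lra]. }
assert (HD0 : 0 <= D) by (unfold D; pose proof (sqrt_pos (p2 v)); lra).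
assert (Hs : 0 < p1 v + sqrt (p2 v)) by (rewrite Hp1; unfold D in *; nra).
destruct (cbrt_pos_cube _ Hs) as [Hc0 Hc3].
destruct (cbrt_pos_cube 2 ltac:(lra)) as [Hk0 Hk3].
set (w := cbrt (p1 v + sqrt (p2 v)) / (3 * cbrt 2)).
assert (Hw0 : w <> 0) by (unfold w; apply Rgt_not_eq, Rdiv_lt_0_compat; lra).
assert (Hw3 : w^3 = - q/2 + D).
{ unfold w. replace ((cbrt (p1 v + sqrt (p2 v)) / (3 * cbrt 2))^3)
    with (cbrt (p1 v + sqrt (p2 v)) ^ 3 / (27 * cbrt 2 ^ 3)) by (field; lra).
  rewrite Hc3, Hk3, Hp1. unfold D. field. }
assert (HQ : Qf v = b/3 + (w - p/(3*w))).
{ unfold Qf, w, p. fold b. field. lra. }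
rewrite HQ, <- (cardano_root p q D w Hw0 HD Hw3).
unfold q, p, b. field. exact Hw0.
Qed.

Lemma cubic_root_between v u : 0 < v < 1 ->
  u^3 - (v^2 - v + 1) * u^2 + u - v * (1 - v) = 0 -> 0 < u < v.
Proof.
intros Hv Hu.
set (b := v^2 - v + 1) in *.
assert (Hb : 3/4 <= b < 1)
  by (unfold b; pose proof (pow2_ge_0 (v - 1/2)); pose proof (Rmult_lt_0_compat v (1 - v)); nra).
assert (Hquad : 0 < u^2 - b * u + 1) by (pose proof (pow2_ge_0 (u - b/2)); nra).
split.
- destruct (Rle_or_lt u 0); [nra | assumption].
- destruct (Rlt_or_le u v) as [|Hvu]; [assumption | exfalso].
  assert (Hg : 0 < u^2 + u*v + v^2 - b * (u + v) + 1).
  { pose proof (pow2_ge_0 (u - v)). pose proof (pow2_ge_0 (u + v - 2*b/3)). nra. }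
  assert (E : u^3 - b * u^2 + u - v * (1 - v)
              = (u - v) * (u^2 + u*v + v^2 - b * (u + v) + 1) + v^3 * (2 - v))
    by (unfold b; ring).
  assert (0 <= (u - v) * (u^2 + u*v + v^2 - b * (u + v) + 1)) by (apply Rmult_le_pos; lra).
  assert (0 < v^3 * (2 - v)) by (apply Rmult_lt_0_compat; [apply pow_lt|]; lra).
  lra.
Qed.

Lemma Qf_0 : Qf 0 = 0.
Proof.
assert (Hroot := Qf_root 0 ltac:(lra)).
set (u := Qf 0) in *.
assert (E : u * ((u - 1/2)^2 + 3/4) = 0) by (rewrite <- Hroot; field).
apply Rmult_integral in E as [|E]; [assumption|].
pose proof (pow2_ge_0 (u - 1/2)). lra.
Qed.

Lemma rpow_pos x y : 0 < x -> rpow x y = exp (y * ln x).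
Proof. intros Hx. unfold rpow. destruct (Req_EM_T x 0); [lra | reflexivity]. Qed.

Lemma rpow_0_r x : rpow x 0 = 1.
Proof.
unfold rpow. destruct (Req_EM_T x 0), (Req_EM_T 0 0); try lra; try reflexivity.
unfold Rpower. rewrite Rmult_0_l. apply exp_0.
Qed.

Lemma rpow_1_l y : rpow 1 y = 1.
Proof. rewrite rpow_pos, ln_1, Rmult_0_r by lra. apply exp_0. Qed.

Lemma h_0 : h 0 = 4.
Proof.
unfold h, xi. rewrite Qf_0.
replace (3 * 0) with 0 by ring. replace (1 - 0 - 0) with 1 by ring.
replace (2 - 0) with 2 by ring. replace (2 - 2 * 0) with 2 by ring.
replace (1 - 2 * 0) with 1 by ring. replace (0 - 0) with 0 by ring.
rewrite Rplus_0_r, !Rminus_0_r, !rpow_0_r, !rpow_1_l.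
rewrite rpow_pos by lra.
replace (2 * ln 2) with (ln 2 + ln 2) by ring. rewrite exp_plus, exp_ln by lra.
field.
Qed.

Lemma ln_le_sub_1 y : 0 < y -> ln y <= y - 1.
Proof. intros Hy. pose proof (exp_ineq1_le (ln y)) as Hexp. rewrite exp_ln in Hexp; lra. Qed.

Lemma mul_ln_ratio_le x z r c : 0 < x -> 0 < z -> 0 < r -> ln r <= c ->
  x * (ln z - ln x) <= x * c + z / r - x.
Proof.
intros Hx Hz Hr Hc.
assert (Hxr : 0 < x * r) by (apply Rmult_lt_0_compat; lra).
assert (E : ln z - ln x - ln r = ln (z / (x * r))) by (rewrite ln_div, ln_mult; lra).
assert (Hln := ln_le_sub_1 (z / (x * r)) ltac:(apply Rdiv_lt_0_compat; lra)).
assert (Hmul : x * (ln z - ln x - ln r) <= x * (z / (x * r) - 1))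
  by (rewrite E; apply Rmult_le_compat_l; lra).
replace (x * (z / (x * r) - 1)) with (z / r - x) in Hmul by (field; lra).
assert (x * ln r <= x * c) by (apply Rmult_le_compat_l; lra).
lra.
Qed.

Ltac tangent_bound x z r c k :=
  pose proof (mul_ln_ratio_le x z r c ltac:(lra) ltac:(lra) ltac:(lra) ltac:(ln_upper_bound k)).

Definition log_h (u v : R) : R :=
  (2 - u) * ln (2 - u) + (1 + u) * ln (1 + u)
  - (ln 4 + 3 * u * ln u + v * ln v + (1 - v - u) * ln (1 - v - u)
     + (v - u) * ln (v - u) + (1 - v) * ln (1 - v) + (1 - u) * ln (1 - u))
  + ((2 - 2 * v) * ln (2 - 2 * v) - (1 - 2 * v) * ln (1 - 2 * v)).

Lemma xi_mul_eq_exp_log_h u v : 0 < u < v -> v < 1/2 ->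
  xi u v * (rpow (2 - 2 * v) (2 - 2 * v) / rpow (1 - 2 * v) (1 - 2 * v)) = exp (log_h u v).
Proof.
intros Huv Hv.
unfold xi, log_h. rewrite !rpow_pos by lra.
rewrite <- (exp_ln 4) at 1 by lra.
unfold Rminus. repeat rewrite ?exp_plus, ?exp_Ropp.
field. repeat split; apply Rgt_not_eq, exp_pos.
Qed.

Lemma log_h_lt u v : 0 < u < v -> v < 1/2 -> log_h u v < 3.08978027742.
Proof.
intros Huv Hv.
assert (Hsplit : log_h u v =
     1 * (ln (2 - u) - ln 1) + (1 - u) * (ln (2 - u) - ln (1 - u))
   + 1 * (ln (1 + u) - ln 1) + u * (ln (1 + u) - ln u) + 2 * (u * (ln 1 - ln u))
   + (1 - 2 * v) * (ln (1 - v) - ln (1 - 2 * v)) + v * (ln (1 - v) - ln v)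
   + (1 - v - u) * (ln 1 - ln (1 - v - u)) + (v - u) * (ln 1 - ln (v - u)) - 2 * v * ln 2).
{ unfold log_h. replace 4 with (2 * 2) by ring.
  replace (2 - 2 * v) with (2 * (1 - v)) by ring. rewrite !ln_mult, ln_1 by lra. ring. }
rewrite Hsplit.
(* The maximiser of log_h is (u, v) ~ (0.24977, 0.31689). *)
tangent_bound 1 (2 - u) 1.75023 0.55974720792 1%nat.
tangent_bound (1 - u) (2 - u) 2.33292 0.84712070188 1%nat.
tangent_bound 1 (1 + u) 1.24977 0.22295953439 0%nat.
tangent_bound u (1 + u) 5.00368 1.6101736418 2%nat.
tangent_bound u 1 4.00368 1.38721393826 2%nat.
tangent_bound (1 - 2 * v) (1 - v) 1.8653 0.62342189811 1%nat.
tangent_bound v (1 - v) 2.15567 0.76810158015 1%nat.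
tangent_bound (1 - v - u) 1 2.30766 0.83623402415 1%nat.
tangent_bound (v - u) 1 14.89869 2.70127328979 4%nat.
pose proof ln2_bounds.
assert (2 * v * 0.6931471766 <= 2 * v * ln 2) by (apply Rmult_le_compat_l; lra).
lra.
Qed.

Theorem lemma4p4 : forall v : R, 0 <= v < 1/2 -> h v < 2197225 / 100000.
Proof.
intros v Hv.
destruct (Req_dec v 0) as [-> | Hv0].
{ rewrite h_0. lra. }
assert (Hu := cubic_root_between v (Qf v) ltac:(lra) (Qf_root v ltac:(lra))).
unfold h. rewrite xi_mul_eq_exp_log_h by lra.
assert (Hln : 3.08978027742 <= ln 21.97225) by ln_lower_bound 4%nat.
replace (2197225 / 100000) with (exp (ln 21.97225)) by (rewrite exp_ln; lra).
apply exp_increasing. pose proof (log_h_lt (Qf v) v ltac:(lra) ltac:(lra)). lra.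
Qed.
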